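(* Let $I$ and $J$ be intervals of $B$ and $\epsilon\ge0$. If $k_I$ and $k_J$ are $\Lambda_\epsilon$-interleaved, then either $I$ and $J$ are of the same type, or $k_I$ and $k_J$ are both $\Lambda_{2\epsilon}$-trivial.
   Context: Let $k$ be a field. The bipath poset $B$ has underlying set $(\mathbb{R}\times\{1,2\})\sqcup\{-\infty,+\infty\}$. Its order is: $x\le y$ iff $x=-\infty$, or $y=+\infty$, or $x=(s,i)$, $y=(t,i)$ with the same $i$ and $s\le t$. An interval of $B$ is a nonempty convex and connected subset (convex: $p,q\in I$, $p\le r\le q$ imply $r\in I$; connected: any two elements are joined by a finite sequence in $I$ with consecutive ones comparable). The interval module $k_I$ (a functor $B\to$ $k$-vector spaces) is $k$ on $I$ and $0$ elsewhere, with identity maps within $I$ and zero maps otherwise. The types of intervals are: - $\mathcal{U}$: intervals contained in $\mathbb{R}\times\{1\}$; - $\mathcal{D}$: intervals contained in $\mathbb{R}\times\{2\}$; - $\mathcal{B}=\{B\}$; - $\mathcal{L}$: intervals $\neq B$ containing $-\infty$; - $\mathcal{R}$: intervals $\neq B$ containing $+\infty$. Two intervals are of the same type if they lie in the same one of these sets. For $\epsilon\ge0$, $\Lambda_\epsilon\colon B\to B$ sends $(r,i)\mapsto(r+\epsilon,i)$ and fixes $\pm\infty$. Then: - $V(\epsilon)_b=V_{\Lambda_\epsilon b}$ and $V(\epsilon)(b,b')=V(\Lambda_\epsilon b,\Lambda_\epsilon b')$; $\phi(\epsilon)$ has components $\phi_{\Lambda_\epsilon b}$; - $V_{0\to\epsilon}$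 has components $V(b,\Lambda_\epsilon b)$; - $V$ is $\Lambda_\epsilon$-trivial if $V_{0\to\epsilon}=0$; - a $\Lambda_\epsilon$-interleaving is a pair $\alpha\colon V\to W(\epsilon)$, $\beta\colon W\to V(\epsilon)$ with $\beta(\epsilon)\alpha=V_{0\to2\epsilon}$ and $\alpha(\epsilon)\beta=W_{0\to2\epsilon}$. *)

From Stdlib Require Import Reals Relations.
From mathcomp Require Import all_boot all_order all_algebra.
Set Implicit Arguments. Unset Strict Implicit. Unset Printing Implicit Defensive.
Import GRing.Theory.
Local Open Scope ring_scope.

Inductive lane := lane1 | lane2.

Inductive bip :=
| Ninf : bip
| Pinf : bip
| Pt : R -> lane -> bip.

Definition ble (x y : bip) : Prop :=
  x = Ninf \/ y = Pinf \/
  exists (s t : R) (i : lane), x = Pt s i /\ y = Pt t i /\ Rle s t.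

Definition convex (I : bip -> bool) : Prop :=
  forall p q r, I p -> I q -> ble p r -> ble r q -> I r.

Definition comp_in (I : bip -> bool) : relation bip :=
  fun x y => I x /\ I y /\ (ble x y \/ ble y x).

Definition connected (I : bip -> bool) : Prop :=
  forall p q, I p -> I q -> clos_refl_trans bip (comp_in I) p q.

Definition is_interval (I : bip -> bool) : Prop :=
  (exists p, I p) /\ convex I /\ connected I.

Definition typeU (I : bip -> bool) : Prop := forall b, I b -> exists r, b = Pt r lane1.
Definition typeD (I : bip -> bool) : Prop := forall b, I b -> exists r, b = Pt r lane2.
Definition typeB (I : bip -> bool) : Prop := forall b, I b.
Definition typeL (I : bip -> bool) : Prop := ~ typeB I /\ I Ninf.
Definition typeR (I : bip -> bool) : Prop := ~ typeB I /\ I Pinf.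

Definition same_type (I J : bip -> bool) : Prop :=
  (typeU I /\ typeU J) \/ (typeD I /\ typeD J) \/ (typeB I /\ typeB J) \/
  (typeL I /\ typeL J) \/ (typeR I /\ typeR J).

Definition shift (e : R) (b : bip) : bip :=
  match b with
  | Pt r i => Pt (Rplus r e) i
  | x => x
  end.

(* ---------- pointwise finite-dimensional modules over B ----------
   V_b = k^(pdim b) (row vectors), V(b,b') : 'M_(pdim b, pdim b') acting by
   v |-> v *m V(b,b') (only meaningful for b <= b'). *)
Record pmod (k : fieldType) := PMod {
  pdim : bip -> nat;
  pmap : forall b b', 'M[k]_(pdim b, pdim b')
}.

Definition pmor (k : fieldType) (V W : pmod k) := forall b, 'M[k]_(pdim V b, pdim W b).

Definition natural (k : fieldType) (V W : pmod k) (f : pmor V W) : Prop :=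
  forall b b', ble b b' -> pmap V b b' *m f b' = f b *m pmap W b b'.

Definition pcomp (k : fieldType) (U V W : pmod k) (g : pmor V W) (f : pmor U V)
  : pmor U W := fun b => f b *m g b.

Definition pshift (k : fieldType) (e : R) (V : pmod k) : pmod k :=
  @PMod k (fun b => pdim V (shift e b)) (fun b b' => pmap V (shift e b) (shift e b')).

Definition mshift (k : fieldType) (e : R) (V W : pmod k) (f : pmor V W)
  : pmor (pshift e V) (pshift e W) := fun b => f (shift e b).

Definition unit0 (k : fieldType) (e : R) (V : pmod k) : pmor V (pshift e V) :=
  fun b => pmap V b (shift e b).

(* V_{0 -> 2eps} viewed as a morphism V -> V(eps)(eps): components
   V(b, Lambda_eps (Lambda_eps b)) = V(b, Lambda_{2eps} b). *)
Definition unit00 (k : fieldType) (e : R) (V : pmod k)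
  : pmor V (pshift e (pshift e V)) :=
  fun b => pmap V b (shift e (shift e b)).

Definition trivial_shift (k : fieldType) (e : R) (V : pmod k) : Prop :=
  forall b, unit0 e V b = 0.

Definition interleaving (k : fieldType) (e : R) (V W : pmod k)
  (a : pmor V (pshift e W)) (bt : pmor W (pshift e V)) : Prop :=
  natural a /\ natural bt /\
  pcomp (mshift e bt) a = unit00 e V /\
  pcomp (mshift e a) bt = unit00 e W.

Definition interleaved (k : fieldType) (e : R) (V W : pmod k) : Prop :=
  exists a bt, @interleaving k e V W a bt.

Definition imod (k : fieldType) (I : bip -> bool) : pmod k :=
  @PMod k (fun b => nat_of_bool (I b))
       (fun b b' => \matrix_(i, j) (if I b && I b' then (1 : k) else 0)).

(** The composite [k_I -> k_J(eps) -> k_I(2 eps)] of an interleaving equals the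
    structure map of [k_I], which is the identity of [k] at every [b] with both
    [b] and [Lambda_{2 eps} b] in [I]; hence [Lambda_eps b] must lie in [J]
    there.  Taking [b = -oo, +oo] shows that [I] and [J] contain the same
    infinite points, and taking [b = Lambda_{-eps} c] shows that [I = B] forces
    [J = B]; this settles all types except [U] and [D].  An interval avoiding
    both infinite points lies on a single lane, and if [I] and [J] lie on
    different lanes, no [b] can have both [b] and [Lambda_{2 eps} b] in [I],
    i.e. [k_I] is [Lambda_{2 eps}]-trivial. *)
From Pilot Require Import Defs.
From Stdlib Require Import Reals Classical.
From mathcomp Require Import all_boot all_order all_algebra.
Set Implicit Arguments. Unset Strict Implicit. Unset Printing Implicit Defensive.
Import GRing.Theory.
Local Open Scope ring_scope.

Lemma shift0 (b : bip) : shift R0 b = b.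
Proof. by case: b => //= r i; rewrite Rplus_0_r. Qed.

Lemma shiftD (e1 e2 : R) (b : bip) : shift (Rplus e1 e2) b = shift e2 (shift e1 b).
Proof. by case: b => //= r i; rewrite Rplus_assoc. Qed.

Lemma shiftNK (e : R) (b : bip) : shift e (shift (Ropp e) b) = b.
Proof. by rewrite -shiftD Rplus_opp_l shift0. Qed.

Definition lane_of (b : bip) : option lane :=
  if b is Pt _ i then Some i else None.

Lemma lane_of_shift (e : R) (b : bip) : lane_of (shift e b) = lane_of b.
Proof. by case: b. Qed.

Lemma lane_of_SomeP (b : bip) (i : lane) :
  lane_of b = Some i -> exists r, b = Pt r i.
Proof. by case: b => // r j [->]; exists r. Qed.

Lemma ble_lane_of (x y : bip) :
  x <> Ninf -> y <> Pinf -> ble x y -> lane_of x = lane_of y.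
Proof. by move=> xN yP [// | [// | [s [t [i [-> [-> _]]]]]]]. Qed.

Lemma connected_lane_of (I : bip -> bool) (x y : bip) :
  connected I -> ~~ I Ninf -> ~~ I Pinf -> I x -> I y -> lane_of x = lane_of y.
Proof.
move=> cI nIN nIP Ix Iy; elim: (cI _ _ Ix Iy) => {x y Ix Iy} [x y [Ix [Iy cmp]]|//|].
- have fin z : I z -> z <> Ninf /\ z <> Pinf.
    by move=> Iz; split=> zE; subst z; rewrite Iz in nIN nIP.
  have [[xN xP] [yN yP]] := (fin _ Ix, fin _ Iy).
  by case: cmp => [|/ble_lane_of ->] //; apply: ble_lane_of.
- by move=> x y z _ -> _ ->.
Qed.

Lemma connected_on_lane (I : bip -> bool) (p : bip) :
  connected I -> ~~ I Ninf -> ~~ I Pinf -> I p ->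
  exists i, forall b, I b -> lane_of b = Some i.
Proof.
move=> cI nIN nIP Ip.
case: p Ip => [| | r i] Ip; [by rewrite Ip in nIN | by rewrite Ip in nIP |].
by exists i => b Ib; rewrite (connected_lane_of cI nIN nIP Ib Ip).
Qed.

Lemma mulmx_inner0 (k : fieldType) m p n (A : 'M[k]_(m, p)) (B : 'M[k]_(p, n)) :
  p = 0%N -> A *m B = 0.
Proof. by move=> p0; subst p; rewrite thinmx0 mul0mx. Qed.

Lemma imod_pmap_eq0 (k : fieldType) (I : bip -> bool) (b b' : bip) :
  (Defs.pmap (imod k I) b b' == 0) = ~~ (I b && I b').
Proof.
rewrite /=; case: (I b) (I b') => [] [] /=; rewrite ?flatmx0 ?thinmx0 ?eqxx //.
by apply/eqP => /matrixP /(_ ord0 ord0) /eqP; rewrite !mxE oner_eq0.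
Qed.

Lemma imod_trivial_shiftP (k : fieldType) (e : R) (I : bip -> bool) :
  trivial_shift e (imod k I) <-> forall b, ~~ (I b && I (shift e b)).
Proof.
by split=> triv b; [rewrite -(imod_pmap_eq0 k); exact/eqP/triv |
                    apply/eqP; rewrite /unit0 imod_pmap_eq0].
Qed.

Lemma interleaved_sym (k : fieldType) (e : R) (V W : pmod k) :
  interleaved e V W -> interleaved e W V.
Proof. by move=> [f [g [nf [ng [gf fg]]]]]; exists g, f. Qed.

Lemma imod_interleaved_mem (k : fieldType) (e : R) (I J : bip -> bool) :
  interleaved e (imod k I) (imod k J) ->
  forall b, I b -> I (shift (Rplus e e) b) -> J (shift e b).
Proof.
move=> [f [g [_ [_ [gf _]]]]] b Ib Ib2; apply/negPn/negP => nJ.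
have := congr1 (fun F : pmor _ _ => F b) gf.
rewrite /Defs.pcomp /mshift /unit00 mulmx_inner0 /=; last by rewrite (negbTE nJ).
by move/esym/eqP; rewrite imod_pmap_eq0 -shiftD Ib Ib2.
Qed.

Lemma typeB_transfer (e : R) (I J : bip -> bool) :
  (forall b, I b -> I (shift (Rplus e e) b) -> J (shift e b)) ->
  typeB I -> typeB J.
Proof. by move=> IJ BI b; rewrite -(shiftNK e b); apply: IJ. Qed.

Lemma imod_trivial_of_lanes (k : fieldType) (e : R) (I J : bip -> bool) (i j : lane) :
  (forall b, I b -> I (shift (Rplus e e) b) -> J (shift e b)) ->
  (forall b, I b -> lane_of b = Some i) -> (forall b, J b -> lane_of b = Some j) ->
  i <> j -> trivial_shift (Rplus e e) (imod k I).
Proof.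
move=> IJ lI lJ ij; apply/imod_trivial_shiftP => b; apply/negP => /andP [Ib Ib2].
by apply: ij; have := lJ _ (IJ _ Ib Ib2); rewrite lane_of_shift lI // => -[].
Qed.

Section SameType.

Variables (e : R) (I J : bip -> bool).
Hypothesis IJ : forall b, I b -> I (shift (Rplus e e) b) -> J (shift e b).
Hypothesis JI : forall b, J b -> J (shift (Rplus e e) b) -> I (shift e b).

Lemma same_type_of_mem_inf (x : bip) :
  x = Ninf \/ x = Pinf -> I x -> same_type I J.
Proof.
move=> xinf Ix; have Jx : J x by case: xinf Ix => -> Ix; apply: (IJ Ix).
case: (classic (typeB I)) => BI.
  by right; right; left; split=> //; apply: typeB_transfer IJ BI.
have nBJ : ~ typeB J by move/(typeB_transfer JI).
by case: xinf Ix Jx => -> Ix Jx; do 3 right; [left | right]; split; split.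
Qed.

Lemma same_type_or_trivial_on_lanes (k : fieldType) (i j : lane) :
  (forall b, I b -> lane_of b = Some i) -> (forall b, J b -> lane_of b = Some j) ->
  same_type I J \/
  (trivial_shift (Rplus e e) (imod k I) /\ trivial_shift (Rplus e e) (imod k J)).
Proof.
move=> lI lJ; case: i j lI lJ => [] [] lI lJ;
  try by right; split; [apply: (imod_trivial_of_lanes k IJ lI lJ) |
                        apply: (imod_trivial_of_lanes k JI lJ lI)].
- by left; left; split=> b Hb; apply: lane_of_SomeP; [exact: lI | exact: lJ].
- by left; right; left; split=> b Hb; apply: lane_of_SomeP; [exact: lI | exact: lJ].
Qed.

End SameType.

Theorem lemma4p9 (k : fieldType) (I J : bip -> bool) (eps : R) :
  is_interval I -> is_interval J -> Rle R0 eps ->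
  interleaved eps (imod k I) (imod k J) ->
  same_type I J \/
  (trivial_shift (Rplus eps eps) (imod k I) /\ trivial_shift (Rplus eps eps) (imod k J)).
Proof.
move=> [[p Ip] [_ cI]] [[q Jq] [_ cJ]] _ ilv.
have IJ := imod_interleaved_mem ilv.
have JI := imod_interleaved_mem (interleaved_sym ilv).
case IN: (I Ninf); first by left; apply: (same_type_of_mem_inf IJ JI _ IN); left.
case IP: (I Pinf); first by left; apply: (same_type_of_mem_inf IJ JI _ IP); right.
have JN : ~~ J Ninf by apply/negP => JN; move: (JI _ JN JN); rewrite /= IN.
have JP : ~~ J Pinf by apply/negP => JP; move: (JI _ JP JP); rewrite /= IP.
have [i lI] := connected_on_lane cI (negbT IN) (negbT IP) Ip.
have [j lJ] := connected_on_lane cJ JN JP Jq.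
exact: (same_type_or_trivial_on_lanes IJ JI k lI lJ).
Qed.
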